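(* If $Q \subset M_\mathbb{R}$ is a lattice polytope that is not $2$-normal, then $\Sigma_Q$ is a proper subset of $P_Q$.
   Context: Let $M$ be an $m$-dimensional affine lattice, $M_\mathbb{R}:=M\otimes_\mathbb{Z}\mathbb{R}$, and $\mathbb{R}[M]$ the group ring (Laurent polynomials). For $f=\sum c_{\mathbf u}z^{\mathbf u}$, $\operatorname{New}(f):=\operatorname{conv}\{\mathbf u: c_{\mathbf u}\ne 0\}$, and $f\ge 0$ means $f$ is nonnegative at every real point of the torus $T=\operatorname{Spec}(\mathbb{R}[M])$. For an $m$-dimensional lattice polytope $Q\subset M_\mathbb{R}$, set $P_Q:=\{f\in\mathbb{R}[M]: \operatorname{New}(f)\subseteq 2Q,\ f\ge 0\}$ and $\Sigma_Q:=\{f = g_1^2+\dotsb+g_k^2 : g_j\in\mathbb{R}[M],\ \operatorname{New}(g_j)\subseteq Q\}$. $Q$ is $2$-normal if every lattice point of $2Q$ is a sum of two lattice points of $Q$. *)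

From HB Require Import structures.
From mathcomp Require Import all_boot all_order all_algebra.
From mathcomp Require Import finmap.
From mathcomp Require Import reals.

Set Implicit Arguments.
Unset Strict Implicit.
Unset Printing Implicit Defensive.

Import Order.TTheory GRing.Theory Num.Theory.
Local Open Scope ring_scope.

(* The lattice M is identified with Z^m (row vectors of integers), so
   M_R = R^m, and R[M] is the ring of real Laurent polynomials in m
   variables. *)

Definition lat (m : nat) := 'rV[int]_m.

Definition laurent (R : realType) (m : nat) := {fsfun lat m -> R with 0}.

Definition supp (R : realType) (m : nat) (f : laurent R m) : seq (lat m) :=
  enum_fset (finsupp f).

Definition toR (R : realType) (m : nat) (u : lat m) : 'rV[R]_m :=
  map_mx (fun z : int => z%:~R) u.

Arguments toR R {m} u.

Definition in_conv (R : realType) (m : nat) (S : seq 'rV[R]_m) (y : 'rV[R]_m) :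
    Prop :=
  exists w : 'I_(size S) -> R,
    [/\ forall i, 0 <= w i, \sum_i w i = 1 & y = \sum_i w i *: S`_i].

Definition polyQ (R : realType) (m : nat) (V : seq (lat m)) : 'rV[R]_m -> Prop :=
  in_conv (map (@toR R m) V).

Arguments polyQ R {m} V _.

Definition dil (R : realType) (m : nat) (k : R) (Q : 'rV[R]_m -> Prop)
    (y : 'rV[R]_m) : Prop :=
  exists2 q, Q q & y = k *: q.

(* conv(V) is m-dimensional: V nonempty and the affine span of V is R^m,
   i.e. the differences v - v_0 (v in V) have rank m. *)
Definition full_dim (R : realType) (m : nat) (V : seq (lat m)) : Prop :=
  V != [::] /\
  \rank (\matrix_(i < size V) (toR R V`_i - toR R V`_0)) = m.

Arguments full_dim R {m} V.

Definition New (R : realType) (m : nat) (f : laurent R m) : 'rV[R]_m -> Prop :=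
  in_conv (map (@toR R m) (supp f)).

Definition New_sub (R : realType) (m : nat) (f : laurent R m)
    (P : 'rV[R]_m -> Prop) : Prop :=
  forall y, New f y -> P y.

Definition ev (R : realType) (m : nat) (f : laurent R m) (x : 'rV[R]_m) : R :=
  \sum_(u <- supp f) f u * \prod_(i < m) (x ord0 i) ^ (u ord0 i).

Definition real_torus (R : realType) (m : nat) (x : 'rV[R]_m) : Prop :=
  forall i, x ord0 i != 0.

Definition nonneg (R : realType) (m : nat) (f : laurent R m) : Prop :=
  forall x, real_torus x -> 0 <= ev f x.

Definition sq_coef (R : realType) (m : nat) (g : laurent R m) (u : lat m) : R :=
  \sum_(v <- supp g) \sum_(w <- supp g) (if v + w == u then g v * g w else 0).

Definition P_Q (R : realType) (m : nat) (V : seq (lat m)) (f : laurent R m) :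
    Prop :=
  New_sub f (dil 2 (polyQ R V)) /\ nonneg f.

Arguments P_Q R {m} V f.

Definition Sigma_Q (R : realType) (m : nat) (V : seq (lat m)) (f : laurent R m) :
    Prop :=
  exists gs : seq (laurent R m),
    (forall g, g \in gs -> New_sub g (polyQ R V)) /\
    (forall u, f u = \sum_(g <- gs) sq_coef g u).

Arguments Sigma_Q R {m} V f.

Definition two_normal (R : realType) (m : nat) (V : seq (lat m)) : Prop :=
  forall u : lat m, dil 2 (polyQ R V) (toR R u) ->
    exists v w : lat m, [/\ polyQ R V (toR R v), polyQ R V (toR R w) & u = v + w].

Arguments two_normal R {m} V.

(* Every exponent of a square g^2 with New(g) ⊆ Q is a sum v + w of two lattice
   points of Q, so Σ_Q ⊆ P_Q.  If a lattice point u of 2Q is not such a sum,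
   then f = z^u + Σ_{v ∈ V} z^(2v) (where Q = conv V) has New(f) ⊆ 2Q, and f is
   not in Σ_Q because its coefficient at z^u is 1.  Yet f ≥ 0 on the real torus:
   log |x^u| is linear in u and u/2 ∈ Q, so |x^u| ≤ x^(2v) for a v ∈ V
   maximising this linear form. *)

From HB Require Import structures.
From mathcomp Require Import all_boot all_order all_algebra.
From mathcomp Require Import finmap.
From mathcomp Require Import reals.
From mathcomp Require Import boolp sequences exp.
Import Order.TTheory GRing.Theory Num.Theory.
Set Implicit Arguments. Unset Strict Implicit.
Local Open Scope ring_scope.

Section ConvexHull.
Variables (R : realType) (m : nat).
Implicit Types (S T : seq 'rV[R]_m) (y : 'rV[R]_m).

Lemma in_conv_mem S s : s \in S -> in_conv S s.
Proof.
move=> sS; pose k := Ordinal (etrans (index_mem s S) sS).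
exists (fun i => (i == k)%:R); split.
- by move=> i; rewrite ler0n.
- by rewrite (bigD1 k) //= eqxx big1 ?addr0 // => i /negPf ->.
- rewrite (bigD1 k) //= eqxx scale1r big1 ?addr0 ?nth_index //.
  by move=> i /negPf ->; rewrite scale0r.
Qed.

Lemma in_conv_trans S T y :
  (forall s, s \in S -> in_conv T s) -> in_conv S y -> in_conv T y.
Proof.
move=> hS [mu [mu0 mu1 ->]].
have /choice[W hW] : forall j : 'I_(size S), exists w : 'I_(size T) -> R,
    [/\ forall i, 0 <= w i, \sum_i w i = 1 & S`_j = \sum_i w i *: T`_i].
  by move=> j; apply/hS/mem_nth.
exists (fun i => \sum_j mu j * W j i); split.
- by move=> i; apply: sumr_ge0 => j _; apply: mulr_ge0 => //; case: (hW j).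
- rewrite exchange_big /= -mu1; apply: eq_bigr => j _.
  by rewrite -mulr_sumr; case: (hW j) => _ -> _; rewrite mulr1.
- under [RHS]eq_bigr do rewrite scaler_suml.
  rewrite exchange_big /=; apply: eq_bigr => j _.
  case: (hW j) => _ _ ->; rewrite scaler_sumr; apply: eq_bigr => i _.
  by rewrite scalerA.
Qed.

Lemma sum_cast_ord (V : nmodType) n1 n2 (E : n1 = n2) (F : 'I_n2 -> V) :
  \sum_(i < n1) F (cast_ord E i) = \sum_i F i.
Proof. by subst; apply: eq_bigr => i _; rewrite cast_ord_id. Qed.

Lemma dil_in_convE (c : R) T :
  dil c (in_conv T) = in_conv (map (fun t => c *: t) T).
Proof.
apply/funext => y; apply/propext.
have E := size_map (fun t => c *: t) T.
have nthE (i : 'I_(size (map (fun t => c *: t) T))) :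
    (map (fun t => c *: t) T)`_i = c *: T`_(cast_ord E i).
  by rewrite (nth_map 0) // -E.
split.
- case=> q [w [w0 w1 ->]] ->.
  exists (fun i => w (cast_ord E i)); split => //; first by rewrite sum_cast_ord.
  under [RHS]eq_bigr do rewrite nthE.
  rewrite (@sum_cast_ord _ _ _ E (fun i => w i *: (c *: T`_i))) scaler_sumr.
  by apply: eq_bigr => i _; rewrite !scalerA mulrC.
- case=> w [w0 w1 ->].
  exists (\sum_j w (cast_ord (esym E) j) *: T`_j).
    exists (fun j => w (cast_ord (esym E) j)); split => //.
    by rewrite sum_cast_ord.
  rewrite scaler_sumr -(@sum_cast_ord _ _ _ (esym E)).
  apply: eq_bigr => i _; rewrite nthE !scalerA mulrC.
  by congr (_ *: _); congr (_ `_ _); apply: val_inj.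
Qed.

Lemma in_conv_add T a b :
  in_conv T a -> in_conv T b -> dil 2 (in_conv T) (a + b).
Proof.
case=> wa [wa0 wa1 ->] [wb [wb0 wb1 ->]].
exists (2^-1 *: (\sum_i wa i *: T`_i + \sum_i wb i *: T`_i)).
  exists (fun i => 2^-1 * (wa i + wb i)); split.
  - by move=> i; apply: mulr_ge0; rewrite ?invr_ge0 ?ler0n ?addr_ge0.
  - by rewrite -mulr_sumr big_split /= wa1 wb1 mulVf // pnatr_eq0.
  - rewrite scalerDr !scaler_sumr -big_split /=; apply: eq_bigr => i _.
    by rewrite !scalerA -scalerDl mulrDr.
by rewrite scalerA mulfV ?scale1r // pnatr_eq0.
Qed.

Lemma in_conv_le_max (c : 'cV[R]_m) T y :
  in_conv T y -> exists2 t, t \in T & (y *m c) 0 0 <= (t *m c) 0 0.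
Proof.
case=> w [w0 w1 ->]; pose a (i : 'I_(size T)) : R := (T`_i *m c) 0 0.
have [i0 _|noT] := pickP (fun i : 'I_(size T) => true); last first.
  by move/esym/eqP: w1; rewrite big1 ?oner_eq0 // => i; have := noT i.
have [k _ ak] := @arg_maxP _ _ _ i0 xpredT a isT.
exists T`_k; first exact: mem_nth.
rewrite mulmx_suml summxE (@le_trans _ _ (\sum_i w i * a k)) //.
  by apply: ler_sum => i _; rewrite -scalemxAl mxE ler_wpM2l //; apply: ak.
by rewrite -mulr_suml w1 mul1r.
Qed.
End ConvexHull.

Section Monomials.
Variables (R : realType) (m : nat).
Implicit Types (f g : laurent R m) (u v w : lat m) (x : 'rV[R]_m).

Definition monomial x u : R := \prod_(i < m) x 0 i ^ u 0 i.

Lemma mem_supp f w : (w \in supp f) = (f w != 0).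
Proof. by rewrite /supp -mem_finsupp. Qed.

Lemma ev_seq f x (S : seq (lat m)) : uniq S -> {subset supp f <= S} ->
  ev f x = \sum_(w <- S) f w * monomial x w.
Proof.
move=> uS supp_S; rewrite -(big_rmcond_in (fun w => f w != 0)); last first.
  by move=> w _; rewrite negbK => /eqP ->; rewrite mul0r.
rewrite -big_filter; apply/perm_big/uniq_perm => [||w].
- exact: fset_uniq.
- exact: filter_uniq.
rewrite mem_filter mem_supp andbC.
by apply/idP/idP => [fw|/andP[]//]; rewrite fw supp_S ?mem_supp.
Qed.

Lemma toRD u v : toR R (u + v) = toR R u + toR R v.
Proof. by apply/matrixP => i j; rewrite !mxE rmorphD. Qed.

Lemma monomialD x u v : real_torus x ->
  monomial x (u + v) = monomial x u * monomial x v.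
Proof.
move=> hx; rewrite /monomial -big_split; apply: eq_bigr => i _.
by rewrite mxE expfzDr.
Qed.

Lemma monomial_double_ge0 x v : real_torus x -> 0 <= monomial x (v + v).
Proof. by move=> hx; rewrite monomialD // -expr2 sqr_ge0. Qed.

Lemma sq_coef_supp g u : sq_coef g u != 0 ->
  exists v w, [/\ v \in supp g, w \in supp g & u = v + w].
Proof.
move=> /eqP nz; apply: contrapT => nopair; apply: nz.
rewrite /sq_coef big1_seq // => v /andP[_ vg].
rewrite big1_seq // => w /andP[_ wg].
by case: eqP => // uE; case: nopair; exists v, w.
Qed.

Lemma ev_sq f x (S : seq (lat m)) : real_torus x -> uniq S ->
  (forall v w, v \in supp f -> w \in supp f -> v + w \in S) ->
  \sum_(u <- S) sq_coef f u * monomial x u = ev f x ^+ 2.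
Proof.
move=> hx uS hS; rewrite /sq_coef.
under eq_bigr do rewrite mulr_suml.
under eq_bigr do under eq_bigr do rewrite mulr_suml.
rewrite exchange_big /=; under eq_bigr do rewrite exchange_big /=.
rewrite expr2 /ev mulr_suml; apply: eq_big_seq => v vf.
rewrite mulr_sumr; apply: eq_big_seq => w wf.
rewrite (bigD1_seq (v + w)) ?hS //= eqxx big1 ?addr0.
  by rewrite monomialD // /monomial mulrACA.
by move=> u; rewrite eq_sym => /negPf ->; rewrite mul0r.
Qed.
End Monomials.

Section SumsOfSquares.
Variables (R : realType) (m : nat) (V : seq (lat m)).
Implicit Types (f : laurent R m) (u : lat m).

Lemma New_sub_supp f (P : 'rV[R]_m -> Prop) w :
  New_sub f P -> w \in supp f -> P (toR R w).
Proof. by move=> sub wf; apply/sub/in_conv_mem/map_f. Qed.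

Lemma New_sub_dil f (c : R) (T : seq 'rV[R]_m) :
  (forall w, f w != 0 -> dil c (in_conv T) (toR R w)) ->
  New_sub f (dil c (in_conv T)).
Proof.
rewrite dil_in_convE => h y; apply: in_conv_trans => _ /mapP[w wf ->].
by apply: h; rewrite -mem_supp.
Qed.

Lemma Sigma_Q_supp f u : Sigma_Q R V f -> f u != 0 ->
  exists v w, [/\ polyQ R V (toR R v), polyQ R V (toR R w) & u = v + w].
Proof.
case=> gs [hg ->] nz.
have /hasP[g gs_g /sq_coef_supp[v [w [vg wg ->]]]] :
    has (fun g => sq_coef g u != 0) gs.
  apply: contraR nz => /hasPn vanish; apply/eqP.
  by rewrite big1_seq // => g /andP[_ /vanish /negPn /eqP].
by exists v, w; split => //; apply: New_sub_supp (hg g gs_g) _.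
Qed.

Lemma Sigma_Q_New_sub f : Sigma_Q R V f -> New_sub f (dil 2 (polyQ R V)).
Proof.
move=> hf; apply: New_sub_dil => u /(Sigma_Q_supp hf)[v [w [hv hw ->]]].
by rewrite toRD; apply: in_conv_add.
Qed.

Lemma Sigma_Q_nonneg f : Sigma_Q R V f -> nonneg f.
Proof.
case=> gs [_ hf] x hx.
pose S := undup (supp f ++
  flatten [seq [seq v + w | v <- supp g, w <- supp g] | g <- gs]).
rewrite (@ev_seq _ _ _ _ S (undup_uniq _)); last first.
  by move=> w wf; rewrite mem_undup mem_cat wf.
under eq_bigr do rewrite hf mulr_suml.
rewrite exchange_big big_seq /=; apply: sumr_ge0 => g gs_g.
rewrite ev_sq ?undup_uniq ?sqr_ge0 // => v w vg wg.
rewrite mem_undup mem_cat; apply/orP; right; apply/flattenP.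
exists [seq v + w | v <- supp g, w <- supp g]; first exact: map_f.
by apply/allpairsP; exists (v, w).
Qed.

Lemma Sigma_Q_sub_P_Q f : Sigma_Q R V f -> P_Q R V f.
Proof. by move=> hf; split; [apply: Sigma_Q_New_sub | apply: Sigma_Q_nonneg]. Qed.
End SumsOfSquares.

Section LogLinearity.
Variables (R : realType) (m : nat).

Lemma expz_expR (a : R) (z : int) : 0 < a -> a ^ z = expR (z%:~R * ln a).
Proof. by move=> a_gt0; rewrite -powR_intmul ?ltW // /powR gt_eqF. Qed.

Lemma normr_expz (a : R) (z : int) : `|a ^ z| = `|a| ^ z.
Proof. by case: z => n; rewrite ?NegzE -?invr_expz ?normfV normrX. Qed.

Definition log_abs (x : 'rV[R]_m) : 'cV[R]_m := \col_j ln `|x 0 j|.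

Lemma norm_monomial (x : 'rV[R]_m) (u : lat m) : real_torus x ->
  `|monomial x u| = expR ((toR R u *m log_abs x) 0 0).
Proof.
move=> hx; rewrite /monomial normr_prod mxE expR_sum; apply: eq_bigr => j _.
by rewrite normr_expz expz_expR ?normr_gt0 // !mxE.
Qed.

Lemma norm_monomial_le_double (V : seq (lat m)) (u : lat m) (x : 'rV[R]_m) :
  real_torus x -> dil 2 (polyQ R V) (toR R u) ->
  exists2 v, v \in V & `|monomial x u| <= monomial x (v + v).
Proof.
move=> hx [q Qq uE].
have [_ /mapP[v vV ->] qv] := in_conv_le_max (log_abs x) Qq.
exists v => //; rewrite -[monomial x (v + v)]ger0_norm ?monomial_double_ge0 //.
move: qv; rewrite !norm_monomial // ler_expR uE toRD -scalemxAl mulmxDl !mxE.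
by rewrite mulr_natl mulr2n => qv; rewrite lerD.
Qed.
End LogLinearity.

Section Witness.
Variables (R : realType) (m : nat) (V : seq (lat m)) (u : lat m).

Definition witness : laurent R m :=
  [fsfun w in seq_fset tt (u :: [seq v + v | v <- V]) => 1 | 0].

Lemma witnessE w : witness w = (w \in u :: [seq v + v | v <- V])%:R.
Proof. by rewrite /witness fsfun_fun seq_fsetE; case: ifP. Qed.

Lemma witness_neq0 w : (witness w != 0) = (w \in u :: [seq v + v | v <- V]).
Proof. by rewrite witnessE pnatr_eq0 eqb0 negbK. Qed.

Hypothesis u_in_2Q : dil 2 (polyQ R V) (toR R u).

Lemma witness_New_sub : New_sub witness (dil 2 (polyQ R V)).
Proof.
apply: New_sub_dil => w; rewrite witness_neq0 inE.
case/orP => [/eqP -> // | /mapP[v vV ->]].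
by rewrite toRD; apply: in_conv_add; apply/in_conv_mem/map_f.
Qed.

Lemma witness_nonneg : u \notin [seq v + v | v <- V] -> nonneg witness.
Proof.
move=> uD x hx; set D := [seq v + v | v <- V].
rewrite (@ev_seq _ _ _ x (u :: undup D)); first last.
- by move=> w; rewrite mem_supp witness_neq0 !inE mem_undup.
- by rewrite /= mem_undup uD undup_uniq.
rewrite big_cons witnessE mem_head mul1r.
rewrite (eq_big_seq (monomial x)) => [|w wD]; last first.
  by rewrite witnessE inE -mem_undup wD orbT mul1r.
have [v vV le_uv] := norm_monomial_le_double hx u_in_2Q.
have vvD : v + v \in undup D by rewrite mem_undup; apply: map_f.
rewrite (bigD1_seq _ vvD (undup_uniq _)) /= addrA.
apply: addr_ge0.
  rewrite addrC -[monomial x u]opprK subr_ge0 (le_trans _ le_uv) //.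
  by rewrite -normrN ler_norm.
rewrite big_seq_cond; apply: sumr_ge0 => w /andP[].
by rewrite mem_undup => /mapP[z _ ->] _; apply: monomial_double_ge0.
Qed.

Lemma witness_not_Sigma_Q :
  (forall v w, polyQ R V (toR R v) -> polyQ R V (toR R w) -> u <> v + w) ->
  ~ Sigma_Q R V witness.
Proof.
move=> indec /(Sigma_Q_supp (u := u)); rewrite witness_neq0 mem_head.
by case=> // v [w [hv hw]]; apply: indec.
Qed.
End Witness.

Unset Implicit Arguments.

Theorem lemma6p2 (R : realType) (m : nat) (V : seq (lat m)) :
  full_dim R V -> ~ two_normal R V ->
  (forall f : laurent R m, Sigma_Q R V f -> P_Q R V f) /\
  (exists f : laurent R m, P_Q R V f /\ ~ Sigma_Q R V f).
Proof.
move=> _ /existsNP[u /not_implyP[u_in_2Q no_split]].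
have indec v w : polyQ R V (toR R v) -> polyQ R V (toR R w) -> u <> v + w.
  by move=> hv hw uE; apply: no_split; exists v, w.
have uD : u \notin [seq v + v | v <- V].
  by apply/mapP => -[v vV]; apply: indec; apply/in_conv_mem/map_f.
split; first exact: Sigma_Q_sub_P_Q.
exists (witness R V u); split; last exact: witness_not_Sigma_Q.
by split; [apply: witness_New_sub | apply: witness_nonneg].
Qed.
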